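(* There exists a linear symplectic coordinate transform generated by an orthogonal rotation matrix $T\in SO(2)$ (acting as $\bar W=TW$, $\bar w=Tw$) depending only on the masses $m=(m_1,m_2,m_3)$ and the charges $e_1,e_2,e_3$ such that under this transformation the lower right $2\times2$ sub-matrix of $B_2(\theta)$ in the system $\begin{pmatrix}\dot{\bar W}\\ \dot{\bar w}\end{pmatrix}=JB_2(\theta)\begin{pmatrix}\bar W\\ \bar w\end{pmatrix}$ is diagonalized, and $B_2(\theta)$ becomes $$\bar B_2(\theta)=\begin{pmatrix}1&0&0&1\\0&1&-1&0\\0&-1&\frac{2e\cos\theta-1-\sqrt{9-\beta}}{2(1+e\cos\theta)}&0\\1&0&0&\frac{2e\cos\theta-1+\sqrt{9-\beta}}{2(1+e\cos\theta)}\end{pmatrix},$$ where $\beta=36(m_2m_3\sin^2\theta_1+m_3m_1\sin^2\theta_2+m_1m_2\sin^2\theta_3)$.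
   Context: Charged planar three-body problem with masses $m_i>0$, $m_1+m_2+m_3=1$, non-collinear central configuration with inner angles $\theta_1,\theta_2,\theta_3$, eccentricity $e\in[0,1)$, true anomaly $\theta$. $I$ is the $2\times2$ identity and $J=\begin{pmatrix}0&-1\\1&0\end{pmatrix}$ (the standard symplectic matrix on $\mathbb{R}^4$ in the ODE). The essential part of the linearized system at the elliptic triangle solution has coefficient matrix $B_2(\theta)=\begin{pmatrix}I&-J\\ J&\frac{e\cos\theta\, I+\tilde D}{1+e\cos\theta}\end{pmatrix}$ with $\tilde D=\begin{pmatrix}1-3d_1&-3d_2\\-3d_2&1-3d_4\end{pmatrix}$, where $d_1=m_1\cos^2(\theta_2-\theta_3)+m_2\cos^2\theta_2+m_3\cos^2\theta_3$, $d_2=m_1\cos(\theta_2-\theta_3)\sin(\theta_2-\theta_3)+m_2\cos\theta_2\sin\theta_2-m_3\cos\theta_3\sin\theta_3$, $d_4=m_1\sin^2(\theta_2-\theta_3)+m_2\sin^2\theta_2+m_3\sin^2\theta_3$. *)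

From HB Require Import structures.
From mathcomp Require Import all_boot all_order all_algebra.
From mathcomp Require Import all_classical all_reals all_analysis.
Set Implicit Arguments. Unset Strict Implicit. Unset Printing Implicit Defensive.
Import Order.TTheory GRing.Theory Num.Theory.
Local Open Scope ring_scope.

Section Defs.
Variable R : realType.

Definition mx2 (a b c d : R) : 'M[R]_2 :=
  \matrix_(i < 2, j < 2) (nth [::] [:: [:: a; b]; [:: c; d]] i)`_j.

Definition J2 : 'M[R]_2 := mx2 0 (-1) 1 0.

Definition J4 : 'M[R]_(2 + 2) := block_mx 0 (- 1%:M) 1%:M 0.

Definition d1 (m1 m2 m3 th2 th3 : R) : R :=
  m1 * cos (th2 - th3) ^+ 2 + m2 * cos th2 ^+ 2 + m3 * cos th3 ^+ 2.
Definition d2 (m1 m2 m3 th2 th3 : R) : R :=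
  m1 * cos (th2 - th3) * sin (th2 - th3) + m2 * cos th2 * sin th2
  - m3 * cos th3 * sin th3.
Definition d4 (m1 m2 m3 th2 th3 : R) : R :=
  m1 * sin (th2 - th3) ^+ 2 + m2 * sin th2 ^+ 2 + m3 * sin th3 ^+ 2.

Definition Dtilde (m1 m2 m3 th2 th3 : R) : 'M[R]_2 :=
  mx2 (1 - 3 * d1 m1 m2 m3 th2 th3) (- 3 * d2 m1 m2 m3 th2 th3)
      (- 3 * d2 m1 m2 m3 th2 th3) (1 - 3 * d4 m1 m2 m3 th2 th3).

Definition B2 (m1 m2 m3 th2 th3 e theta : R) : 'M[R]_(2 + 2) :=
  block_mx 1%:M (- J2) J2
    ((1 + e * cos theta)^-1 *: ((e * cos theta)%:M + Dtilde m1 m2 m3 th2 th3)).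

Definition beta (m1 m2 m3 th1 th2 th3 : R) : R :=
  36 * (m2 * m3 * sin th1 ^+ 2 + m3 * m1 * sin th2 ^+ 2 + m1 * m2 * sin th3 ^+ 2).

Definition mx4 (rows : seq (seq R)) : 'M[R]_(2 + 2) :=
  \matrix_(i < 2 + 2, j < 2 + 2) (nth [::] rows i)`_j.

Definition Bbar2 (m1 m2 m3 th1 th2 th3 e theta : R) : 'M[R]_(2 + 2) :=
  let b := beta m1 m2 m3 th1 th2 th3 in
  let c := e * cos theta in
  mx4 [:: [:: 1; 0; 0; 1];
          [:: 0; 1; -1; 0];
          [:: 0; -1; (2 * c - 1 - Num.sqrt (9 - b)) / (2 * (1 + c)); 0];
          [:: 1; 0; 0; (2 * c - 1 + Num.sqrt (9 - b)) / (2 * (1 + c))]].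

Definition SO2 (T : 'M[R]_2) : Prop := T *m T^T = 1%:M /\ \det T = 1.

(* the induced linear coordinate change (Wbar, wbar) = (T W, T w) on R^4 *)
Definition liftT (T : 'M[R]_2) : 'M[R]_(2 + 2) := block_mx T 0 0 T.

End Defs.

From HB Require Import structures.
From mathcomp Require Import all_boot all_order all_algebra.
From mathcomp Require Import all_classical all_reals all_analysis.
From mathcomp Require Import ring lra.
(* Conjugating [J4 *m B2] by [liftT T] only affects the lower-right block, because a
   rotation commutes with [J2] and [liftT T] is symplectic for orthogonal [T]; that block
   is [(e cos theta I + Dtilde) / (1 + e cos theta)], an affine expression in the constant
   symmetric matrix [Dtilde], so a single rotation diagonalising [Dtilde] works for every
   [theta].  Since [d1 + d4 = m1 + m2 + m3 = 1], [Dtilde] has trace [-1], and a weighted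
   Lagrange identity together with the sine addition law gives
   [d1 d4 - d2^2 = beta / 36] once [th1 + th2 + th3 = pi]; hence its discriminant is
   [9 - beta] and its eigenvalues are [(-1 -+ sqrt (9 - beta)) / 2]. *)

Set Implicit Arguments. Unset Strict Implicit. Unset Printing Implicit Defensive.

Import Order.TTheory GRing.Theory Num.Theory.
Local Open Scope ring_scope.

Section TwoByTwo.
Variable R : realType.

Lemma mx2_eta (A : 'M[R]_2) : A = mx2 (A 0 0) (A 0 1) (A 1 0) (A 1 1).
Proof.
apply/matrixP=> i j; rewrite !mxE.
by case: i => [[|[|i]] Hi]; case: j => [[|[|j]] Hj] //=; congr (A _ _); apply: val_inj.
Qed.

Lemma mul_mx2 (a b c d a' b' c' d' : R) :
  mx2 a b c d *m mx2 a' b' c' d'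
  = mx2 (a * a' + b * c') (a * b' + b * d') (c * a' + d * c') (c * b' + d * d').
Proof.
apply/matrixP=> i j; rewrite /mx2 !mxE !big_ord_recr big_ord0 /= !mxE add0r.
by case: i => [[|[|i]] Hi]; case: j => [[|[|j]] Hj].
Qed.

Lemma tr_mx2 (a b c d : R) : (mx2 a b c d)^T = mx2 a c b d.
Proof. by rewrite [LHS]mx2_eta !mxE. Qed.

Lemma det_mx2 (a b c d : R) : \det (mx2 a b c d) = a * d - b * c.
Proof.
rewrite (expand_det_row _ 0) !big_ord_recr big_ord0 /=.
by rewrite /cofactor !det_mx11 !mxE /= expr0 expr1; ring.
Qed.

Lemma scalar_mx2 (x : R) : x%:M = mx2 x 0 0 x.
Proof. by rewrite [LHS]mx2_eta !mxE. Qed.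

Lemma add_mx2 (a b c d a' b' c' d' : R) :
  mx2 a b c d + mx2 a' b' c' d' = mx2 (a + a') (b + b') (c + c') (d + d').
Proof. by rewrite [LHS]mx2_eta !mxE. Qed.

Lemma opp_mx2 (a b c d : R) : - mx2 a b c d = mx2 (- a) (- b) (- c) (- d).
Proof. by rewrite [LHS]mx2_eta !mxE. Qed.

Lemma scale_mx2 (k a b c d : R) : k *: mx2 a b c d = mx2 (k * a) (k * b) (k * c) (k * d).
Proof. by rewrite [LHS]mx2_eta !mxE. Qed.

Lemma mx4_block (a b c d e f g h i j k l m n o p : R) :
  mx4 [:: [:: a; b; c; d]; [:: e; f; g; h]; [:: i; j; k; l]; [:: m; n; o; p]]
  = block_mx (mx2 a b e f) (mx2 c d g h) (mx2 i j m n) (mx2 k l o p).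
Proof.
rewrite -[LHS]submxK; congr block_mx; apply/matrixP=> r t; rewrite !mxE /=;
  by case: r => [[|[|r]] Hr]; case: t => [[|[|t]] Ht].
Qed.

End TwoByTwo.

Lemma conj_affine (R : comPzRingType) n (T M D : 'M[R]_n) (k x : R) :
  T *m M = D *m T -> T *m (k *: (x%:M + M)) = (k *: (x%:M + D)) *m T.
Proof. by move=> TM; rewrite -scalemxAr -scalemxAl mulmxDr mulmxDl TM scalar_mxC. Qed.

Section Rotations.
Variable R : realType.

Definition rot2 (c s : R) : 'M[R]_2 := mx2 c s (- s) c.

Lemma rot2_SO2 (c s : R) : c ^+ 2 + s ^+ 2 = 1 -> SO2 (rot2 c s).
Proof.
move=> cs; split; last by rewrite det_mx2; lra.
by rewrite tr_mx2 mul_mx2 scalar_mx2; congr mx2; lra.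
Qed.

Lemma rot2_J2C (c s : R) : rot2 c s *m J2 R = J2 R *m rot2 c s.
Proof. by rewrite !mul_mx2; congr mx2; ring. Qed.

(* Only the first row [c s] has to be an eigenvector: by symmetry of [mx2 a b b d]
   the orthogonal row [-s c] is then one for the other eigenvalue [a + d - l]. *)
Lemma rot2_conj_sym2 (a b d l c s : R) :
  c * a + s * b = l * c -> c * b + s * d = l * s ->
  rot2 c s *m mx2 a b b d = mx2 l 0 0 (a + d - l) *m rot2 c s.
Proof. by move=> Ec Es; rewrite !mul_mx2; congr mx2; lra. Qed.

End Rotations.

Section SymmetricEigen.
Variable R : realType.

Lemma sym2_eigenvector (a b d r : R) :
  0 <= r -> r ^+ 2 = (a - d) ^+ 2 + 4 * b ^+ 2 ->
  exists u v : R, 0 < u ^+ 2 + v ^+ 2 /\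
    u * a + v * b = (a + d - r) / 2 * u /\ u * b + v * d = (a + d - r) / 2 * v.
Proof.
move=> r0 hr; have [hpos|hneg] := ltrP 0 (r + (a - d)).
- exists (-2 * b), (a - d + r); split; [|split].
  + by apply: ltr_wpDl; rewrite ?sqr_ge0 // exprn_gt0 // addrC.
  + by field.
  + apply/eqP; rewrite -subr_eq0; apply/eqP.
    transitivity ((r ^+ 2 - (a - d) ^+ 2 - 4 * b ^+ 2) / 2); first by field.
    by rewrite hr; ring.
- have hda : r <= d - a by lra.
  have da0 : 0 <= d - a by lra.
  rewrite (_ : (a - d) ^+ 2 = (d - a) ^+ 2) in hr; last by ring.
  have hr2 : r ^+ 2 <= (d - a) ^+ 2 by rewrite ler_sqr ?nnegrE.
  have hb : b = 0.
    apply/eqP; rewrite -sqrf_eq0 eq_le sqr_ge0 andbT.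
    by move: hr2; rewrite hr gerDl pmulr_rle0.
  have hr' : r = d - a.
    apply/eqP; rewrite eq_le hda /= -ler_sqr ?nnegrE //.
    by rewrite hr lerDl mulr_ge0 ?sqr_ge0.
  exists 1, 0; rewrite hb hr'; split; first by rewrite expr1n expr0n addr0.
  by split; field.
Qed.

Lemma sym2_unit_eigenvector (a b d l u v : R) :
  0 < u ^+ 2 + v ^+ 2 -> u * a + v * b = l * u -> u * b + v * d = l * v ->
  exists c s : R, c ^+ 2 + s ^+ 2 = 1 /\ c * a + s * b = l * c /\ c * b + s * d = l * s.
Proof.
move=> huv Eu Ev; set N := Num.sqrt (u ^+ 2 + v ^+ 2).
have N2 : N ^+ 2 = u ^+ 2 + v ^+ 2 by rewrite sqr_sqrtr // ltW.
have N0 : N != 0 by rewrite gt_eqF // sqrtr_gt0.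
exists (u / N), (v / N); split.
  by rewrite !expr_div_n -mulrDl -N2 divff // expf_neq0.
split; [transitivity ((u * a + v * b) / N) | transitivity ((u * b + v * d) / N)].
- by field.
- by rewrite Eu; field.
- by field.
- by rewrite Ev; field.
Qed.
End SymmetricEigen.

Section Symplectic.
Variable R : realType.

Lemma liftT_symplectic (T : 'M[R]_2) :
  T^T *m T = 1%:M -> (liftT T)^T *m J4 R *m liftT T = J4 R.
Proof.
move=> TtT; rewrite /liftT /J4 tr_block_mx !mulmx_block.
by rewrite !(mul0mx, mulmx0, mul1mx, mulmx1, add0r, addr0, mulNmx, mulmxN, trmx0) TtT.
Qed.

Lemma liftT_J4_block_conj (T K K' : 'M[R]_2) :
  T *m J2 R = J2 R *m T -> T *m K = K' *m T ->
  liftT T *m (J4 R *m block_mx 1%:M (- J2 R) (J2 R) K)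
  = (J4 R *m block_mx 1%:M (- J2 R) (J2 R) K') *m liftT T.
Proof.
move=> TJ TK; rewrite /liftT /J4 !mulmx_block.
rewrite !(mul0mx, mulmx0, mul1mx, mulmx1, add0r, addr0, mulNmx, mulmxN).
by congr block_mx; rewrite ?TJ ?TK.
Qed.

End Symplectic.

Lemma weighted_lagrange_identity (R : comPzRingType) (m1 m2 m3 c1 s1 c2 s2 c3 s3 : R) :
  (m1 * c1 ^+ 2 + m2 * c2 ^+ 2 + m3 * c3 ^+ 2) * (m1 * s1 ^+ 2 + m2 * s2 ^+ 2 + m3 * s3 ^+ 2)
  - (m1 * c1 * s1 + m2 * c2 * s2 - m3 * c3 * s3) ^+ 2
  = m1 * m2 * (c1 * s2 - c2 * s1) ^+ 2 + m1 * m3 * (c1 * s3 + c3 * s1) ^+ 2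
    + m2 * m3 * (c2 * s3 + c3 * s2) ^+ 2.
Proof. by ring. Qed.

Lemma one_add_mul_cos_gt0 (R : realType) (e theta : R) :
  0 <= e -> e < 1 -> 0 < 1 + e * cos theta.
Proof.
move=> e0 e1; have : - e <= e * cos theta by rewrite -mulrN1 ler_wpM2l // cos_geN1.
by lra.
Qed.

Section ChargedThreeBody.
Variable R : realType.
Variables m1 m2 m3 th1 th2 th3 : R.
Hypothesis hm : m1 + m2 + m3 = 1.
Hypothesis hpi : th1 + th2 + th3 = pi.

Local Notation D1 := (d1 m1 m2 m3 th2 th3).
Local Notation D2 := (d2 m1 m2 m3 th2 th3).
Local Notation D4 := (d4 m1 m2 m3 th2 th3).
Local Notation beta0 := (beta m1 m2 m3 th1 th2 th3).

Lemma d1_add_d4 : D1 + D4 = m1 + m2 + m3.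
Proof.
transitivity (m1 * (cos (th2 - th3) ^+ 2 + sin (th2 - th3) ^+ 2)
  + m2 * (cos th2 ^+ 2 + sin th2 ^+ 2) + m3 * (cos th3 ^+ 2 + sin th3 ^+ 2)).
  by rewrite /d1 /d4; ring.
by rewrite !cos2Dsin2 !mulr1.
Qed.

Lemma d1_mul_d4_sub_d2_sqr : D1 * D4 - D2 ^+ 2 = beta0 / 36.
Proof.
have s3 : cos (th2 - th3) * sin th2 - cos th2 * sin (th2 - th3) = sin th3.
  by rewrite [cos _ * sin th2]mulrC -sinB opprB addrC subrK.
have s2 : cos (th2 - th3) * sin th3 + cos th3 * sin (th2 - th3) = sin th2.
  by rewrite addrC [cos th3 * _]mulrC -sinD subrK.
have s1 : cos th2 * sin th3 + cos th3 * sin th2 = sin th1.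
  rewrite addrC [cos th3 * _]mulrC -sinD (_ : th1 = - (th2 + th3) + pi); last by rewrite -hpi; ring.
  by rewrite sinDpi sinN opprK.
rewrite /d1 /d2 /d4 weighted_lagrange_identity s1 s2 s3 /beta.
by field.
Qed.

Lemma Dtilde_discriminant :
  ((1 - 3 * D1) - (1 - 3 * D4)) ^+ 2 + 4 * (- 3 * D2) ^+ 2 = 9 - beta0.
Proof.
transitivity (9 * ((D1 + D4) ^+ 2 - 4 * (D1 * D4 - D2 ^+ 2))); first by ring.
by rewrite d1_add_d4 hm d1_mul_d4_sub_d2_sqr; field.
Qed.

Lemma Dtilde_rot2_diag : let r := Num.sqrt (9 - beta0) in
  exists c s : R, c ^+ 2 + s ^+ 2 = 1 /\
    rot2 c s *m Dtilde m1 m2 m3 th2 th3 = mx2 ((-1 - r) / 2) 0 0 ((-1 + r) / 2) *m rot2 c s.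
Proof.
move=> r; have hr : r ^+ 2 = 9 - beta0.
  rewrite sqr_sqrtr // -Dtilde_discriminant.
  by apply: addr_ge0; [|apply: mulr_ge0]; rewrite ?sqr_ge0 ?ler0n.
rewrite -Dtilde_discriminant in hr.
have [u [v [huv [Eu Ev]]]] := sym2_eigenvector (sqrtr_ge0 _) hr.
have [c [s [cs [Ec Es]]]] := sym2_unit_eigenvector huv Eu Ev.
exists c, s; split => //; rewrite /Dtilde (rot2_conj_sym2 Ec Es).
have tr : 1 - 3 * D1 + (1 - 3 * D4) = -1.
  by rewrite addrACA -opprD -mulrDr d1_add_d4 hm; ring.
by rewrite tr /r; congr (mx2 _ _ _ _ *m _); field.
Qed.

Lemma Bbar2_block (e theta : R) :
  let c := e * cos theta in let r := Num.sqrt (9 - beta0) in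
  Bbar2 m1 m2 m3 th1 th2 th3 e theta
  = block_mx 1%:M (- J2 R) (J2 R)
      (mx2 ((2 * c - 1 - r) / (2 * (1 + c))) 0 0 ((2 * c - 1 + r) / (2 * (1 + c)))).
Proof.
rewrite /Bbar2 mx4_block /J2 scalar_mx2 opp_mx2.
by congr block_mx; congr mx2; rewrite ?oppr0 ?opprK.
Qed.

End ChargedThreeBody.

Theorem theorem3p5 (R : realType) (m1 m2 m3 th1 th2 th3 : R) :
  0 < m1 -> 0 < m2 -> 0 < m3 -> m1 + m2 + m3 = 1 ->
  0 < th1 -> 0 < th2 -> 0 < th3 -> th1 + th2 + th3 = pi ->
  exists T : 'M[R]_2,
    SO2 T /\
    (liftT T)^T *m J4 R *m liftT T = J4 R /\
    forall e theta : R, 0 <= e -> e < 1 ->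
      liftT T *m (J4 R *m B2 m1 m2 m3 th2 th3 e theta)
      = (J4 R *m Bbar2 m1 m2 m3 th1 th2 th3 e theta) *m liftT T.
Proof.
move=> _ _ _ hm _ _ _ hpi.
have [c [s [cs TD]]] := Dtilde_rot2_diag hm hpi.
have SO2T := rot2_SO2 cs; have [TTt _] := SO2T.
exists (rot2 c s); split=> //; split; first by apply: liftT_symplectic; apply: mulmx1C.
move=> e theta e0 e1; have ecos := one_add_mul_cos_gt0 theta e0 e1.
rewrite Bbar2_block /B2; apply: liftT_J4_block_conj; first exact: rot2_J2C.
rewrite (conj_affine _ _ TD) scalar_mx2 add_mx2 scale_mx2.
by congr (mx2 _ _ _ _ *m _); field; rewrite gt_eqF.
Qed.
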